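(* Let $(K,S^0)$ be a divided simplicial complex with associated layered complex $(K,C,S)$, and let $s,p$ be simplices of $K$ such that (i) $p$ is an intermediate simplex of $(K,C,S)$, (ii) $p$ is principal in $K$, (iii) $s$ is a face of $p$ which is free in $K$, and (iv) every simplex $t$ of $S$ which is a proper face of $p$ is a proper face of $s$. Let $K_1=K-\{s,p\}$. Then $K_1$ has the same vertex set as $K$, so that $(K_1,S^0)$ is a divided simplicial complex, and the layered complex $(K_1,C,S)$ is the layered complex associated to the divided complex $(K_1,S^0)$.
   Context: A simplicial complex $K$ is a set of finite nonempty sets (simplices) closed under passing to nonempty subsets (faces); $K^0$ is its vertex set. A simplex is principal in $K$ if it is not a proper face of any simplex of $K$; $s$ is free in $K$ if it is a proper face of a principal simplex $p$ and of no other simplex of $K$. A layered simplicial complex is a triple $(K,C,S)$ with $C,S$ disjoint subcomplexes of $K$; its intermediate simplices are the simplices lying in neither $C$ nor $S$. A divided simplicial complex is a pair $(K,S^0)$ with $S^0\subseteq K^0$; its associated layered complex $(K,C,S)$ has $S$ = simplices all of whose vertices lie in $S^0$ and $C$ = simplices all of whose vertices lie in $K^0-S^0$. *)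

From mathcomp Require Import all_boot finmap.
Set Implicit Arguments. Unset Strict Implicit. Unset Printing Implicit Defensive.
Local Open Scope fset_scope.

(* Vertices live in an arbitrary choiceType T; simplices are finite sets
   {fset T}; a collection of simplices is a predicate on {fset T}.
   Equality of collections is stated extensionally (pointwise iff). *)
Section Defs.
Variable T : choiceType.
Definition cplx := {fset T} -> Prop.

Definition is_complex (K : cplx) : Prop :=
  (forall s, K s -> s != fset0) /\
  (forall s t, K s -> t != fset0 -> fsubset t s -> K t).

Definition vertices (K : cplx) : T -> Prop := fun v => exists s, K s /\ v \in s.

Definition subcomplex (L K : cplx) : Prop := is_complex L /\ forall t, L t -> K t.

Definition principal (K : cplx) (p : {fset T}) : Prop :=
  K p /\ forall q, K q -> ~ fproper p q.

Definition free (K : cplx) (s : {fset T}) : Prop :=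
  K s /\ exists p, principal K p /\ fproper s p /\
         forall q, K q -> fproper s q -> q = p.

Definition layered (K C S : cplx) : Prop :=
  subcomplex C K /\ subcomplex S K /\ forall t, ~ (C t /\ S t).

Definition intermediate (K C S : cplx) (t : {fset T}) : Prop :=
  K t /\ ~ C t /\ ~ S t.

Definition divided (K : cplx) (S0 : T -> Prop) : Prop :=
  is_complex K /\ forall v, S0 v -> vertices K v.

Definition assocS (K : cplx) (S0 : T -> Prop) : cplx :=
  fun t => K t /\ forall v, v \in t -> S0 v.
Definition assocC (K : cplx) (S0 : T -> Prop) : cplx :=
  fun t => K t /\ forall v, v \in t -> ~ S0 v.

Definition remove2 (K : cplx) (s p : {fset T}) : cplx :=
  fun t => K t /\ t <> s /\ t <> p.
End Defs.

From mathcomp Require Import all_boot finmap.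
From Stdlib Require Import Classical.
Set Implicit Arguments. Unset Strict Implicit. Unset Printing Implicit Defensive.
Local Open Scope fset_scope.

(* Removing the free pair (s, p) is an elementary collapse, so K - {s, p} is a
   complex.  Since p is not in C it has a vertex u in S0; the singleton {u} is
   a proper face of p lying in S, so by (iv) it is a proper face of s.  Hence
   s and p have at least two vertices each: every vertex survives as a
   singleton, and neither s nor p lies in C or S, so removing them changes
   neither C nor S. *)

Section Collapse.
Variable T : choiceType.
Implicit Types (K L C S : cplx T) (s p t : {fset T}).

Lemma assocS_remove2 K (P : T -> Prop) s p :
  ~ assocS K P s -> ~ assocS K P p ->
  forall t, assocS (remove2 K s p) P t <-> assocS K P t.
Proof.
move=> nSs nSp t; split=> [[[Kt _] Pt] | [Kt Pt]]; first by [].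
split=> //; split=> //.
by split=> e; subst t; [apply: nSs | apply: nSp].
Qed.

Lemma layered_restrict K L C S :
  layered K C S -> (forall t, C t -> L t) -> (forall t, S t -> L t) ->
  layered L C S.
Proof. by move=> [[cC _] [[cS _] disjCS]] CL SL. Qed.

Lemma free_face_coface K s p :
  principal K p -> fsubset s p -> free K s ->
  fproper s p /\ forall q, K q -> fproper s q -> q = p.
Proof.
move=> [Kp max_p] sp [_ [p' [[Kp' _] [sp' coface]]]].
have sp_proper : fproper s p.
  rewrite fproperEneq sp andbT; apply/eqP => e.
  by apply: (max_p p' Kp'); rewrite -e.
split=> // q Kq sq.
by rewrite (coface q Kq sq) (coface p Kp sp_proper).
Qed.

Lemma assocC_witness K (S0 : T -> Prop) t :
  K t -> ~ assocC K S0 t -> exists2 v, v \in t & S0 v.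
Proof.
move=> Kt nCt; apply: NNPP => no_v; apply: nCt; split=> // v vt S0v.
by apply: no_v; exists v.
Qed.

Variable K : cplx T.
Hypothesis cK : is_complex K.

Lemma complex_fset1 t v : K t -> v \in t -> K [fset v].
Proof.
move=> Kt vt; apply: cK.2 Kt _ _; last by rewrite fsub1set.
by rewrite -cardfs_gt0 cardfs1.
Qed.

Lemma remove2_complex s p :
  principal K p -> (forall q, K q -> fproper s q -> q = p) ->
  is_complex (remove2 K s p).
Proof.
move=> [_ max_p] coface; split=> [t [Kt _] | w t [Kw [ws wp]] t0 tw].
  exact: cK.1.
split; first exact: cK.2 Kw t0 tw.
split=> e; subst t.
- by apply: wp; apply: coface => //; rewrite fproperEneq tw andbT eq_sym; apply/eqP.
- by apply: (max_p w Kw); rewrite fproperEneq tw andbT; apply/eqP => e; apply: wp.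
Qed.

Lemma remove2_vertices s p :
  (1 < #|`s|)%N -> (1 < #|`p|)%N ->
  forall v, vertices (remove2 K s p) v <-> vertices K v.
Proof.
move=> card_s card_p v; split=> [[t [[Kt _] vt]] | [t [Kt vt]]]; first by exists t.
exists [fset v]; split; last by rewrite inE.
split; first exact: complex_fset1 Kt vt.
by split=> e; [move: card_s | move: card_p]; rewrite -e cardfs1.
Qed.

Lemma assocS_complex (P : T -> Prop) : is_complex (assocS K P).
Proof.
split=> [t [Kt _] | w t [Kw Pw] t0 tw]; first exact: cK.1.
by split=> [|v vt]; [exact: cK.2 Kw t0 tw | apply: Pw; exact: (fsubsetP tw)].
Qed.

Lemma assoc_layered (S0 : T -> Prop) : layered K (assocC K S0) (assocS K S0).
Proof.
split; first by split; [exact: assocS_complex | move=> t []].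
split; first by split; [exact: assocS_complex | move=> t []].
move=> t [[Kt notS0] [_ allS0]].
have /fset0Pn [v vt] := cK.1 t Kt.
exact: notS0 v vt (allS0 v vt).
Qed.

End Collapse.

Theorem lemma4p9 (T : choiceType) (K : cplx T) (S0 : T -> Prop) (s p : {fset T}) :
  divided K S0 ->
  intermediate K (assocC K S0) (assocS K S0) p ->
  principal K p ->
  fsubset s p -> free K s ->
  (forall t, assocS K S0 t -> fproper t p -> fproper t s) ->
  let K1 := remove2 K s p in
  is_complex K1 /\
  (forall v, vertices K1 v <-> vertices K v) /\
  divided K1 S0 /\
  layered K1 (assocC K S0) (assocS K S0) /\
  (forall t, assocC K1 S0 t <-> assocC K S0 t) /\
  (forall t, assocS K1 S0 t <-> assocS K S0 t).
Proof.
move=> [cK S0_vert] [Kp [nCp nSp]] prin_p sp free_s S_faces K1.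
have [sp_proper coface_s] := free_face_coface prin_p sp free_s.
have [u up S0u] := assocC_witness Kp nCp.
have card_p : (1 < #|`p|)%N.
  apply: leq_trans _ (fproper_ltn_card sp_proper).
  by rewrite ltnS cardfs_gt0; apply: cK.1; case: free_s.
have Su : assocS K S0 [fset u].
  by split=> [|v]; [exact: complex_fset1 Kp up | rewrite inE => /eqP ->].
have u_proper_s : fproper [fset u] s.
  by apply: S_faces Su _; rewrite fproperEcard fsub1set up cardfs1.
have card_s : (1 < #|`s|)%N by rewrite -(cardfs1 u) fproper_ltn_card.
have nCs : ~ assocC K S0 s.
  have us : u \in s by rewrite -fsub1set fproper_sub.
  by case=> _ notS0; exact: notS0 u us S0u.
have nSs : ~ assocS K S0 s.
  by move=> Ss; apply: (negP (fproper_irrefl s)); apply: S_faces Ss sp_proper.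
(* assocC K S0 is, by definition, assocS K (fun v => ~ S0 v). *)
have eqC : forall t, assocC K1 S0 t <-> assocC K S0 t.
  exact: (assocS_remove2 (P := fun v => ~ S0 v)) nCs nCp.
have eqS := assocS_remove2 nSs nSp.
have cK1 := remove2_complex cK prin_p coface_s.
have vert := remove2_vertices cK card_s card_p.
do 2 (split=> //); split; first by split=> // v /S0_vert /vert.
split=> //; apply: layered_restrict (assoc_layered cK S0) _ _.
- by move=> t /eqC [].
- by move=> t /eqS [].
Qed.
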